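(* Let $N\ge 0$ be an integer, let $T^{(1)}=\{t^{(1)}_{n',n}\}_{0\le n',n\le N}$ and $T^{(2)}=\{t^{(2)}_{n',n}\}_{0\le n',n\le N}$ be real $(N+1)\times(N+1)$ matrices, and let $\{f'_{n_1,n_2}\}$ be real numbers indexed by the sparse index set $\{(n_1,n_2)\in\mathbb{N}_0^2: n_1+n_2\le N\}$. Define, for $n_1+n_2\le N$, $$f_{n_1,n_2}=\sum_{\substack{n_1',n_2'\ge 0\\ n_1'+n_2'\le N}} f'_{n_1',n_2'}\, t^{(1)}_{n_1',n_1}\, t^{(2)}_{n_2',n_2}.$$ 1. Define the ''first $x_1$, then $x_2$'' computation: for $n_1+n_2'\le N$, $g_{n_1,n_2'}=\sum_{0\le n_1'\le N-n_2'} f'_{n_1',n_2'}\,t^{(1)}_{n_1',n_1}$, and for $n_1+n_2\le N$, $\tilde f_{n_1,n_2}=\sum_{0\le n_2'\le N-n_1} g_{n_1,n_2'}\,t^{(2)}_{n_2',n_2}$. Suppose at least one of the following holds: (a) $T^{(1)}$ is lower triangular, i.e. $t^{(1)}_{n_1',n_1}=0$ whenever $n_1'<n_1$; (b) $T^{(2)}$ is upper triangular, i.e. $t^{(2)}_{n_2',n_2}=0$ whenever $n_2'>n_2$. Then $\tilde f_{n_1,n_2}=f_{n_1,n_2}$ for all $(n_1,n_2)$ with $n_1+n_2\le N$. 2. Define the ''first $x_2$, then $x_1$'' computation: for $n_1'+n_2\le N$, $h_{n_1',n_2}=\sum_{0\le n_2'\le N-n_1'} f'_{n_1',n_2'}\,t^{(2)}_{n_2',n_2}$,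 and for $n_1+n_2\le N$, $\hat f_{n_1,n_2}=\sum_{0\le n_1'\le N-n_2} h_{n_1',n_2}\,t^{(1)}_{n_1',n_1}$. Suppose at least one of the following holds: (a) $T^{(1)}$ is upper triangular, i.e. $t^{(1)}_{n_1',n_1}=0$ whenever $n_1'>n_1$; (b) $T^{(2)}$ is lower triangular, i.e. $t^{(2)}_{n_2',n_2}=0$ whenever $n_2'<n_2$. Then $\hat f_{n_1,n_2}=f_{n_1,n_2}$ for all $(n_1,n_2)$ with $n_1+n_2\le N$.
   Context: $\mathbb{N}_0$ denotes the nonnegative integers. All quantities $f'$, $g$, $h$, $f$, $\tilde f$, $\hat f$ are only defined on index pairs whose sum is at most $N$ (a sparse, triangular index set), which is why the ranges of summation in the dimension-by-dimension computations are truncated as written. *)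

From HB Require Import structures.
From mathcomp Require Import all_boot all_order all_algebra.
Set Implicit Arguments. Unset Strict Implicit. Unset Printing Implicit Defensive.
Import Order.TTheory GRing.Theory Num.Theory.
Local Open Scope ring_scope.

Definition ent (R : ringType) (N : nat) (T : 'M[R]_(N.+1)) (i j : nat) : R :=
  T (inord i) (inord j).

Definition lower_tri (R : ringType) (N : nat) (T : 'M[R]_(N.+1)) : Prop :=
  forall i j : 'I_N.+1, (i < j)%N -> T i j = 0.
Definition upper_tri (R : ringType) (N : nat) (T : 'M[R]_(N.+1)) : Prop :=
  forall i j : 'I_N.+1, (j < i)%N -> T i j = 0.

Definition ffull (R : ringType) (N : nat) (T1 T2 : 'M[R]_(N.+1))
  (fp : nat -> nat -> R) (n1 n2 : nat) : R :=
  \sum_(0 <= a < N.+1) \sum_(0 <= b < (N - a).+1)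
     fp a b * ent T1 a n1 * ent T2 b n2.

Definition gx1 (R : ringType) (N : nat) (T1 : 'M[R]_(N.+1))
  (fp : nat -> nat -> R) (n1 b : nat) : R :=
  \sum_(0 <= a < (N - b).+1) fp a b * ent T1 a n1.

Definition ftilde (R : ringType) (N : nat) (T1 T2 : 'M[R]_(N.+1))
  (fp : nat -> nat -> R) (n1 n2 : nat) : R :=
  \sum_(0 <= b < (N - n1).+1) gx1 T1 fp n1 b * ent T2 b n2.

Definition hx2 (R : ringType) (N : nat) (T2 : 'M[R]_(N.+1))
  (fp : nat -> nat -> R) (a n2 : nat) : R :=
  \sum_(0 <= b < (N - a).+1) fp a b * ent T2 b n2.

Definition fhat (R : ringType) (N : nat) (T1 T2 : 'M[R]_(N.+1))
  (fp : nat -> nat -> R) (n1 n2 : nat) : R :=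
  \sum_(0 <= a < (N - n2).+1) hx2 T2 fp a n2 * ent T1 a n1.

From HB Require Import structures.
From mathcomp Require Import all_boot all_order all_algebra.
From mathcomp Require Import zify.
Import Order.TTheory GRing.Theory Num.Theory.
Local Open Scope ring_scope.

(* Both iterated computations sum the same terms
   [f'_{a,b} t1_{a,n1} t2_{b,n2}] as [f_{n1,n2}], except that the outer range
   is cut short: [f~] drops the terms with [b > N - n1], [f^] those with
   [a > N - n2].  On the dropped part of the triangle [a + b <= N] one has
   [a < n1] and [b > n2] (resp. [a > n1] and [b < n2]), so each triangularity
   hypothesis kills every dropped term. *)

Section TriangleSums.

Variables (R : nmodType) (N : nat).

Lemma triangle_sum_square (F : nat -> nat -> R) :
  \sum_(0 <= a < N.+1) \sum_(0 <= b < (N - a).+1) F a b =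
  \sum_(0 <= a < N.+1) \sum_(0 <= b < N.+1 | (a + b <= N)%N) F a b.
Proof.
apply: eq_big_nat => a /andP[_ aN].
rewrite (big_nat_widen _ _ N.+1) ?ltnS ?leq_subr //; apply: eq_bigl => b /=.
by rewrite ltnS; lia.
Qed.

Lemma triangle_sum_exchange (F : nat -> nat -> R) :
  \sum_(0 <= a < N.+1) \sum_(0 <= b < (N - a).+1) F a b =
  \sum_(0 <= b < N.+1) \sum_(0 <= a < (N - b).+1) F a b.
Proof.
rewrite !triangle_sum_square (exchange_big_dep_nat xpredT) //=.
by apply: eq_big_nat => b _; apply: eq_bigl => a; rewrite addnC.
Qed.

Lemma triangle_sum_trunc (k : nat) (F : nat -> nat -> R) :
  (k <= N)%N ->
  (forall a b, (k < a)%N -> (a + b <= N)%N -> F a b = 0) ->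
  \sum_(0 <= a < k.+1) \sum_(0 <= b < (N - a).+1) F a b =
  \sum_(0 <= a < N.+1) \sum_(0 <= b < (N - a).+1) F a b.
Proof.
move=> kN F0; rewrite [RHS](big_cat_nat _ (n := k.+1)) //=.
rewrite [X in _ = _ + X]big1_seq ?addr0 // => a.
rewrite mem_index_iota => /andP[ka aN]; apply: big1_seq => b.
by rewrite mem_index_iota => /andP[_ bN]; apply: F0 => //; lia.
Qed.

End TriangleSums.

Section TriangularEntries.

Context {R : nzRingType} {N : nat} {T : 'M[R]_N.+1}.

Lemma lower_tri_ent_eq0 (lowT : lower_tri T) (i j : nat) :
  (j <= N)%N -> (i < j)%N -> ent T i j = 0.
Proof. by move=> jN ij; apply: lowT; rewrite !inordK //; lia. Qed.

Lemma upper_tri_ent_eq0 (upT : upper_tri T) (i j : nat) :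
  (i <= N)%N -> (j < i)%N -> ent T i j = 0.
Proof. by move=> iN ji; apply: upT; rewrite !inordK //; lia. Qed.

End TriangularEntries.

Section IteratedTransforms.

Variables (R : comNzRingType) (N : nat) (T1 T2 : 'M[R]_N.+1).
Variables (fp : nat -> nat -> R) (n1 n2 : nat).

Let term a b := fp a b * ent T1 a n1 * ent T2 b n2.

Lemma ftilde_triangle :
  ftilde T1 T2 fp n1 n2 =
  \sum_(0 <= b < (N - n1).+1) \sum_(0 <= a < (N - b).+1) term a b.
Proof. by apply: eq_bigr => b _; rewrite /gx1 big_distrl. Qed.

Lemma fhat_triangle :
  fhat T1 T2 fp n1 n2 =
  \sum_(0 <= a < (N - n2).+1) \sum_(0 <= b < (N - a).+1) term a b.
Proof.
apply: eq_bigr => a _; rewrite /hx2 big_distrl /=.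
by apply: eq_bigr => b _; rewrite /term mulrAC.
Qed.

Lemma ftilde_eq_ffull :
  (n1 + n2 <= N)%N -> (lower_tri T1 \/ upper_tri T2) ->
  ftilde T1 T2 fp n1 n2 = ffull T1 T2 fp n1 n2.
Proof.
move=> n12N triT; rewrite ftilde_triangle /ffull -/term triangle_sum_exchange.
apply: triangle_sum_trunc => [|b a bn1 abN]; first exact: leq_subr.
rewrite addnC in abN; case: triT => [lowT1|upT2].
- by rewrite /term (lower_tri_ent_eq0 lowT1) ?mulr0 ?mul0r //; lia.
- by rewrite /term (upper_tri_ent_eq0 upT2) ?mulr0 //; lia.
Qed.

Lemma fhat_eq_ffull :
  (n1 + n2 <= N)%N -> (upper_tri T1 \/ lower_tri T2) ->
  fhat T1 T2 fp n1 n2 = ffull T1 T2 fp n1 n2.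
Proof.
move=> n12N triT; rewrite fhat_triangle /ffull -/term.
apply: triangle_sum_trunc => [|a b an2 abN]; first exact: leq_subr.
case: triT => [upT1|lowT2].
- by rewrite /term (upper_tri_ent_eq0 upT1) ?mulr0 ?mul0r //; lia.
- by rewrite /term (lower_tri_ent_eq0 lowT2) ?mulr0 //; lia.
Qed.

End IteratedTransforms.

Theorem proposition3p1 (R : realFieldType) (N : nat) (T1 T2 : 'M[R]_(N.+1))
  (fp : nat -> nat -> R) :
  ((lower_tri T1 \/ upper_tri T2) ->
     forall n1 n2 : nat, (n1 + n2 <= N)%N -> ftilde T1 T2 fp n1 n2 = ffull T1 T2 fp n1 n2)
  /\
  ((upper_tri T1 \/ lower_tri T2) ->
     forall n1 n2 : nat, (n1 + n2 <= N)%N -> fhat T1 T2 fp n1 n2 = ffull T1 T2 fp n1 n2).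
Proof.
split=> triT n1 n2 n12N; first exact: ftilde_eq_ffull.
exact: fhat_eq_ffull.
Qed.
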